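(* Let $f\in C([0,1])$ with $f>0$, $\lambda>0$, $H_\lambda=\{a\in C([0,1]):a>\lambda \text{ on }[0,1]\}$, and $F(a)(x)=\int_0^x \frac{\int_0^z f(s)ds}{a(z)}dz$. Let $W\subset C([0,1])$ be a finite-dimensional subspace, $K\subset W\cap H_\lambda$ compact and convex, and $(Q_N)_{N\in\mathbb{N}}$ a sequence of bounded finite-rank operators $Q_N:C([0,1])\to C([0,1])$ converging strongly to the identity. Then there exist $D\in\mathbb{N}$ and $C>0$ such that $\|a_1-a_2\|_\infty\le C\|Q_D(F(a_1))-Q_D(F(a_2))\|_\infty$ for all $a_1,a_2\in K$.
   Context: $C([0,1])$ carries the supremum norm $\|\cdot\|_\infty$. *)

From Stdlib Require Import Reals Lra List.
From Coquelicot Require Import Coquelicot.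
Open Scope R_scope.

Definition I01 := {x : R | 0 <= x <= 1}.

Lemma clamp_in (x : R) : 0 <= Rmax 0 (Rmin x 1) <= 1.
Proof. unfold Rmax, Rmin; repeat destruct Rle_dec; lra. Qed.

Definition clamp (x : R) : I01 := exist _ (Rmax 0 (Rmin x 1)) (clamp_in x).

(* Extension of a function on [0,1] to R (constant outside); only used to
   feed Coquelicot's RInt with integrands whose values on [0,1] matter. *)
Definition ext (g : I01 -> R) : R -> R := fun x => g (clamp x).

(* g is continuous on [0,1]; C([0,1]) = {g : I01 -> R | contI g}. *)
Definition contI (g : I01 -> R) : Prop :=
  forall (x : I01) (eps : R), 0 < eps ->
    exists delta, 0 < delta /\
      forall y : I01, Rabs (proj1_sig y - proj1_sig x) < delta ->
                      Rabs (g y - g x) < eps.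

Definition supnorm (g : I01 -> R) : R :=
  real (Lub_Rbar (fun r => exists x : I01, r = Rabs (g x))).

Definition Fop (f a : I01 -> R) : I01 -> R :=
  fun x => RInt (fun z => RInt (ext f) 0 z / ext a z) 0 (proj1_sig x).

Definition H_lam (lam : R) (a : I01 -> R) : Prop :=
  contI a /\ forall x : I01, lam < a x.

Fixpoint lincomb (l : list (I01 -> R)) (c : list R) (x : I01) : R :=
  match l, c with
  | g :: l', a :: c' => a * g x + lincomb l' c' x
  | _, _ => 0
  end.

Definition subspaceC (W : (I01 -> R) -> Prop) : Prop :=
  (forall g, W g -> contI g) /\
  W (fun _ => 0) /\
  (forall g h, W g -> W h -> W (fun x => g x + h x)) /\
  (forall c g, W g -> W (fun x => c * g x)).

Definition findim (W : (I01 -> R) -> Prop) : Prop :=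
  exists l : list (I01 -> R), forall g, W g -> exists c, g = lincomb l c.

Definition open_sup (U : (I01 -> R) -> Prop) : Prop :=
  forall g, U g -> exists e, 0 < e /\
    forall h, contI h -> supnorm (fun x => h x - g x) < e -> U h.

Definition compactC (K : (I01 -> R) -> Prop) : Prop :=
  (forall g, K g -> contI g) /\
  forall (J : Type) (U : J -> (I01 -> R) -> Prop),
    (forall j, open_sup (U j)) ->
    (forall g, K g -> exists j, U j g) ->
    exists l : list J, forall g, K g -> exists j, In j l /\ U j g.

Definition convexC (K : (I01 -> R) -> Prop) : Prop :=
  forall g h t, K g -> K h -> 0 <= t <= 1 ->
    K (fun x => t * g x + (1 - t) * h x).

(* Q is a bounded linear finite-rank operator C([0,1]) -> C([0,1]).
   Q is given on all functions I01 -> R; only its behaviour on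
   continuous functions is constrained. *)
Definition bdd_finrank_op (Q : (I01 -> R) -> (I01 -> R)) : Prop :=
  (forall g, contI g -> contI (Q g)) /\
  (forall g h, contI g -> contI h -> Q (fun x => g x + h x) = (fun x => Q g x + Q h x)) /\
  (forall c g, contI g -> Q (fun x => c * g x) = (fun x => c * Q g x)) /\
  (exists M, forall g, contI g -> supnorm (Q g) <= M * supnorm g) /\
  (exists l : list (I01 -> R), forall g, contI g -> exists c, Q g = lincomb l c).

Definition strong_to_id (Q : nat -> (I01 -> R) -> (I01 -> R)) : Prop :=
  forall g, contI g -> is_lim_seq (fun N => supnorm (fun x => Q N g x - g x)) 0.

(* If no pair (D, C) works, there are
   a1_N, a2_N in K with ||a1_N - a2_N|| > (N+1) ||Q_N (F a1_N - F a2_N)||.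
   The normalised differences h_N = (a1_N - a2_N) / ||a1_N - a2_N|| lie on
   the unit sphere of the finite-dimensional space W, so along a subsequence
   a1_N -> A1, a2_N -> A2 (compactness of K) and h_N -> H <> 0 uniformly.
   The difference quotients of F are integrals of the kernel
   - G h_N / (a1_N a2_N), with G(z) = int_0^z f, and converge uniformly to
   S(x) = int_0^x - G H / (A1 A2).  As Q_N applied to them tends to 0,
   Q_N -> id strongly and the Q_N are uniformly bounded (Banach-Steinhaus,
   proved below by a gliding-hump argument), S = 0.  Differentiating,
   G H = 0, and G > 0 on (0,1] forces H = 0: a contradiction. *)

From Stdlib Require Import Reals Lra Lia List Classical ClassicalEpsilon
  FunctionalExtensionality ProofIrrelevance.
From Coquelicot Require Import Coquelicot.
Open Scope R_scope.

(** * The interval [0,1], the sup norm and continuity *)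

Lemma clamp_id (x : I01) : clamp (proj1_sig x) = x.
Proof.
  destruct x as [x Hx]; unfold clamp.
  apply eq_sig_hprop; [intros; apply proof_irrelevance|]; simpl.
  unfold Rmax, Rmin; repeat destruct Rle_dec; lra.
Qed.

Lemma clamp_val (y : R) : 0 <= y <= 1 -> proj1_sig (clamp y) = y.
Proof. intros H; simpl; unfold Rmax, Rmin; repeat destruct Rle_dec; lra. Qed.

Lemma clamp_lip (x y : R) :
  Rabs (proj1_sig (clamp y) - proj1_sig (clamp x)) <= Rabs (y - x).
Proof.
  simpl; unfold Rmax, Rmin; repeat destruct Rle_dec;
    unfold Rabs; repeat destruct Rcase_abs; lra.
Qed.

Lemma ext_val (g : I01 -> R) (x : I01) : ext g (proj1_sig x) = g x.
Proof. unfold ext; rewrite clamp_id; reflexivity. Qed.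

Definition pt0 : I01 := clamp 0.

Definition bounded (g : I01 -> R) : Prop := exists M, forall x, Rabs (g x) <= M.

Lemma sup_ge (g : I01 -> R) (x : I01) : bounded g -> Rabs (g x) <= supnorm g.
Proof.
  intros [M HM]; unfold supnorm.
  destruct (Lub_Rbar_correct (fun r => exists x : I01, r = Rabs (g x))) as [Hub Hlub].
  assert (Hle : Rbar_le (Lub_Rbar (fun r => exists x : I01, r = Rabs (g x))) (Finite M)).
  { apply Hlub; intros r [y ->]; apply HM. }
  assert (Hge : Rbar_le (Finite (Rabs (g x)))
                  (Lub_Rbar (fun r => exists x : I01, r = Rabs (g x)))).
  { apply Hub; exists x; reflexivity. }
  destruct (Lub_Rbar _); simpl in *; tauto.
Qed.

Lemma sup_le (g : I01 -> R) (M : R) : (forall x, Rabs (g x) <= M) -> supnorm g <= M.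
Proof.
  intros HM; unfold supnorm.
  destruct (Lub_Rbar_correct (fun r => exists x : I01, r = Rabs (g x))) as [Hub Hlub].
  assert (Hle : Rbar_le (Lub_Rbar (fun r => exists x : I01, r = Rabs (g x))) (Finite M)).
  { apply Hlub; intros r [y ->]; apply HM. }
  assert (Hge : Rbar_le (Finite (Rabs (g pt0)))
                  (Lub_Rbar (fun r => exists x : I01, r = Rabs (g x)))).
  { apply Hub; exists pt0; reflexivity. }
  destruct (Lub_Rbar _); simpl in *; tauto.
Qed.

(* The sup norm is nonnegative (an unbounded sup is read as 0). *)
Lemma sup_nonneg (g : I01 -> R) : 0 <= supnorm g.
Proof.
  unfold supnorm.
  destruct (Lub_Rbar_correct (fun r => exists x : I01, r = Rabs (g x))) as [Hub _].
  assert (Hge : Rbar_le (Finite (Rabs (g pt0)))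
                  (Lub_Rbar (fun r => exists x : I01, r = Rabs (g x))))
    by (apply Hub; exists pt0; reflexivity).
  pose proof (Rabs_pos (g pt0)).
  destruct (Lub_Rbar _); simpl in *; lra.
Qed.

Lemma sup_eq (g h : I01 -> R) : (forall x, g x = h x) -> supnorm g = supnorm h.
Proof. intros E; f_equal; apply functional_extensionality; auto. Qed.

Lemma sup_scal (c : R) (g : I01 -> R) :
  bounded g -> supnorm (fun x => c * g x) = Rabs c * supnorm g.
Proof.
  intros Hb; apply Rle_antisym.
  - apply sup_le; intros x; rewrite Rabs_mult.
    apply Rmult_le_compat_l; [apply Rabs_pos | apply sup_ge; auto].
  - destruct (Req_dec c 0) as [->|Hc].
    + rewrite Rabs_R0, Rmult_0_l; apply sup_nonneg.
    + assert (Hb' : bounded (fun x => c * g x)).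
      { destruct Hb as [M HM]; exists (Rabs c * M); intros x; rewrite Rabs_mult.
        apply Rmult_le_compat_l; [apply Rabs_pos | auto]. }
      assert (Hca : 0 < Rabs c) by (apply Rabs_pos_lt; auto).
      apply (Rmult_le_reg_l (/ Rabs c)); [apply Rinv_0_lt_compat; auto|].
      rewrite <- Rmult_assoc, Rinv_l, Rmult_1_l by lra.
      apply sup_le; intros x.
      apply (Rmult_le_reg_l (Rabs c)); auto.
      rewrite <- Rmult_assoc, Rinv_r, Rmult_1_l by lra.
      rewrite <- Rabs_mult; apply (sup_ge (fun x => c * g x)); auto.
Qed.

Lemma sup_triang (g h k : I01 -> R) : bounded g -> bounded h ->
  (forall x, k x = g x + h x) -> supnorm k <= supnorm g + supnorm h.
Proof.
  intros Hg Hh E; apply sup_le; intros x; rewrite E.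
  eapply Rle_trans; [apply Rabs_triang|].
  apply Rplus_le_compat; apply sup_ge; auto.
Qed.

Lemma sup_zero (g : I01 -> R) : bounded g -> supnorm g = 0 -> forall x, g x = 0.
Proof.
  intros Hb H0 x; pose proof (sup_ge g x Hb) as Hx; rewrite H0 in Hx.
  destruct (Req_dec (g x) 0) as [|Hne]; auto.
  pose proof (Rabs_pos_lt _ Hne); lra.
Qed.

Lemma continuous_of_eps (h : R -> R) (x : R) :
  (forall e, 0 < e -> exists d, 0 < d /\
     forall y, Rabs (y - x) < d -> Rabs (h y - h x) < e) ->
  continuous h x.
Proof.
  intros H; apply continuity_pt_filterlim; intros e He.
  destruct (H e He) as [d [Hd Hy]]; exists d; split; auto.
  intros y [_ Hyd]; apply Hy; exact Hyd.
Qed.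

Lemma eps_of_continuous (u : R -> R) (y : R) : continuous u y ->
  forall e, 0 < e -> exists d, 0 < d /\
    forall z, Rabs (z - y) < d -> Rabs (u z - u y) < e.
Proof.
  intros Hc e He; apply continuity_pt_filterlim in Hc.
  destruct (Hc e He) as [d [Hd Hz]]; exists d; split; auto.
  intros z Hzy; destruct (Req_dec z y) as [->|Hne].
  - unfold Rminus; rewrite Rplus_opp_r, Rabs_R0; auto.
  - apply Hz; split; [split; [exact I | intro; apply Hne; auto] | exact Hzy].
Qed.

Lemma ext_cont (g : I01 -> R) (x : R) : contI g -> continuous (ext g) x.
Proof.
  intros Hg; apply continuous_of_eps; intros e He.
  destruct (Hg (clamp x) e He) as [d [Hd Hy]]; exists d; split; auto.
  intros y Hyx; unfold ext; apply Hy.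
  eapply Rle_lt_trans; [apply clamp_lip | exact Hyx].
Qed.

Lemma contI_R (u : R -> R) :
  (forall y, 0 <= y <= 1 -> continuous u y) -> contI (fun x => u (proj1_sig x)).
Proof.
  intros Hu x e He.
  destruct (eps_of_continuous u (proj1_sig x) (Hu _ (proj2_sig x)) e He) as [d [Hd H]].
  exists d; split; [exact Hd|]; intros y Hy; apply H; exact Hy.
Qed.

Lemma contI_bounded (g : I01 -> R) : contI g -> bounded g.
Proof.
  intros Hg.
  destruct (continuity_ab_maj (fun x => Rabs (ext g x)) 0 1 ltac:(lra)) as [xm [HM _]].
  { intros c _; apply continuity_pt_filterlim.
    apply (continuous_comp (ext g) Rabs); [apply ext_cont; auto|].
    apply continuity_pt_filterlim, Rcontinuity_abs. }
  exists (Rabs (ext g xm)); intros x; rewrite <- ext_val; apply HM.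
  destruct x; simpl; auto.
Qed.

Lemma contI_ext (g h : I01 -> R) : (forall x, g x = h x) -> contI g -> contI h.
Proof.
  intros E Hg x e He; destruct (Hg x e He) as [d [Hd H]]; exists d; split; auto.
  intros y Hy; rewrite <- !E; auto.
Qed.

Lemma contI_const (c : R) : contI (fun _ => c).
Proof.
  intros x e He; exists 1; split; [lra|]; intros.
  unfold Rminus; rewrite Rplus_opp_r, Rabs_R0; auto.
Qed.

Lemma contI_add (g h : I01 -> R) : contI g -> contI h -> contI (fun x => g x + h x).
Proof.
  intros Hg Hh.
  apply (contI_ext (fun x => ext g (proj1_sig x) + ext h (proj1_sig x))).
  { intros; rewrite !ext_val; auto. }
  apply (contI_R (fun y => ext g y + ext h y)); intros y _.
  apply (continuous_plus (V:=R_NormedModule) (ext g) (ext h)); apply ext_cont; auto.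
Qed.

Lemma contI_scal (c : R) (g : I01 -> R) : contI g -> contI (fun x => c * g x).
Proof.
  intros Hg; apply (contI_ext (fun x => c * ext g (proj1_sig x))).
  { intros; rewrite ext_val; auto. }
  apply (contI_R (fun y => c * ext g y)); intros y _.
  apply (continuous_mult (K:=R_AbsRing) (fun _ => c) (ext g));
    [apply continuous_const | apply ext_cont; auto].
Qed.

Lemma contI_sub (g h : I01 -> R) : contI g -> contI h -> contI (fun x => g x - h x).
Proof.
  intros Hg Hh; apply (contI_ext (fun x => g x + (-1 * h x))); [intros; ring|].
  apply contI_add, contI_scal; auto.
Qed.

Lemma sup_ge_sub (g h : I01 -> R) (x : I01) : contI g -> contI h ->
  Rabs (g x - h x) <= supnorm (fun y => g y - h y).
Proof.
  intros Hg Hh; apply (sup_ge (fun y => g y - h y)), contI_bounded, contI_sub; auto.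
Qed.

(** * Bounded linear operators and the uniform boundedness principle *)

Section LinearOperator.
Variable T : (I01 -> R) -> (I01 -> R).
Hypothesis HT : bdd_finrank_op T.

Lemma T_cont (g : I01 -> R) : contI g -> contI (T g).
Proof. destruct HT as [H _]; auto. Qed.

Lemma T_eq (g h : I01 -> R) : (forall x, g x = h x) -> T g = T h.
Proof. intros E; f_equal; apply functional_extensionality; auto. Qed.

Lemma T_scal (c : R) (g : I01 -> R) (x : I01) :
  contI g -> T (fun y => c * g y) x = c * T g x.
Proof. destruct HT as [_ [_ [H _]]]; intros Hg; rewrite H; auto. Qed.

Lemma T_add (g h : I01 -> R) (x : I01) : contI g -> contI h ->
  T (fun y => g y + h y) x = T g x + T h x.
Proof. destruct HT as [_ [H _]]; intros Hg Hh; rewrite H; auto. Qed.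

Lemma T_sub (g h : I01 -> R) (x : I01) : contI g -> contI h ->
  T (fun y => g y - h y) x = T g x - T h x.
Proof.
  intros Hg Hh.
  rewrite (T_eq (fun y => g y - h y) (fun y => g y + (fun z => -1 * h z) y))
    by (intros; simpl; ring).
  rewrite T_add, T_scal by (auto; apply contI_scal; auto); ring.
Qed.

Lemma T_zero (g : I01 -> R) (x : I01) : contI g -> (forall y, g y = 0) -> T g x = 0.
Proof.
  intros Hg Hz; rewrite (T_eq g (fun y => 0 * g y)) by (intros; rewrite Hz; ring).
  rewrite T_scal; auto; ring.
Qed.

Lemma T_sup_sub (m : R) (g h : I01 -> R) : contI g -> contI h ->
  (forall u, contI u -> supnorm (T u) <= m * supnorm u) ->
  supnorm (fun x => T g x - T h x) <= m * supnorm (fun x => g x - h x).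
Proof.
  intros Hg Hh Hm; rewrite <- (Hm (fun x => g x - h x)) by (apply contI_sub; auto).
  right; apply sup_eq; intros x; rewrite T_sub; auto.
Qed.

Lemma op_norm_exists : exists m, 0 <= m /\
   (forall z, contI z -> supnorm (T z) <= m * supnorm z) /\
   (forall e, e < m -> exists z, contI z /\ supnorm z <= 1 /\ e < supnorm (T z)).
Proof.
  pose (E := fun r => exists z, contI z /\ supnorm z <= 1 /\ r = supnorm (T z)).
  destruct HT as [_ [_ [_ [[M HM] _]]]].
  assert (Hbd : bound E).
  { exists (Rabs M); intros r [z [Hz [Hs ->]]]; eapply Rle_trans; [apply HM; auto|].
    pose proof (sup_nonneg z); pose proof (Rle_abs M).
    pose proof (Rabs_pos M); nra. }
  assert (E0 : E (supnorm (T (fun _ => 0)))).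
  { exists (fun _ => 0); repeat split; [apply contI_const|].
    apply sup_le; intros; rewrite Rabs_R0; lra. }
  destruct (completeness E Hbd (ex_intro _ _ E0)) as [m [Hub Hlub]].
  exists m; split; [|split].
  - eapply Rle_trans; [|apply Hub; exact E0].
    apply sup_nonneg.
  - intros z Hz; pose proof (sup_nonneg z) as Hs0.
    destruct (Req_dec (supnorm z) 0) as [H0|H0].
    + rewrite H0, Rmult_0_r; apply sup_le; intros x.
      rewrite (T_zero z x Hz (sup_zero z (contI_bounded z Hz) H0)), Rabs_R0; lra.
    + assert (Hsp : 0 < supnorm z) by lra.
      assert (Hin : E (supnorm (T (fun x => / supnorm z * z x)))).
      { exists (fun x => / supnorm z * z x); repeat split; [apply contI_scal; auto|].
        rewrite sup_scal, Rabs_right by (auto using contI_bounded;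
          left; apply Rinv_0_lt_compat; auto).
        rewrite Rinv_l; lra. }
      apply Hub in Hin.
      rewrite (sup_eq _ (fun x => / supnorm z * T z x)) in Hin
        by (intros; apply T_scal; auto).
      rewrite sup_scal, Rabs_right in Hin
        by (auto using contI_bounded, T_cont; left; apply Rinv_0_lt_compat; auto).
      apply (Rmult_le_compat_l (supnorm z)) in Hin; [|lra].
      rewrite <- Rmult_assoc, Rinv_r, Rmult_1_l in Hin by lra; lra.
  - intros e He; apply NNPP; intros Hn.
    assert (m <= e); [|lra].
    apply Hlub; intros r [z [Hz [Hs ->]]]; apply Rnot_lt_le; intros Hlt.
    apply Hn; exists z; auto.
Qed.

(* One gliding-hump step: moving x by r z in a suitable direction gives
   ||T x'|| >= r ||T z||, since T(x + r z) - T(x - r z) = 2 r T z. *)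
Definition hump_step (z : I01 -> R) (r : R) (x : I01 -> R) : I01 -> R :=
  if Rle_dec (r * supnorm (T z)) (supnorm (T (fun t => x t + r * z t)))
  then fun t => x t + r * z t else fun t => x t - r * z t.

Lemma hump_step_spec (z : I01 -> R) (r : R) (x : I01 -> R) :
  contI x -> contI z -> supnorm z <= 1 -> 0 < r ->
  contI (hump_step z r x) /\ (forall t, Rabs (hump_step z r x t - x t) <= r) /\
  r * supnorm (T z) <= supnorm (T (hump_step z r x)).
Proof.
  intros Hx Hz Hs Hr.
  assert (Hrz : contI (fun t => r * z t)) by (apply contI_scal; auto).
  assert (Hp : contI (fun t => x t + r * z t)) by (apply contI_add; auto).
  assert (Hm : contI (fun t => x t - r * z t)) by (apply contI_sub; auto).
  assert (Hbnd : forall t, Rabs (r * z t) <= r).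
  { intros t; rewrite Rabs_mult, Rabs_right by lra.
    pose proof (sup_ge z t (contI_bounded z Hz)); nra. }
  unfold hump_step; destruct Rle_dec as [Hle|Hnle].
  - split; [auto | split; auto].
    intros t; replace (x t + r * z t - x t) with (r * z t) by ring; auto.
  - split; [auto | split].
    + intros t; replace (x t - r * z t - x t) with (- (r * z t)) by ring.
      rewrite Rabs_Ropp; auto.
    + apply Rnot_le_lt in Hnle.
      enough (2 * r * supnorm (T z) <= supnorm (T (fun t => x t + r * z t))
                                       + supnorm (T (fun t => x t - r * z t))) by lra.
      rewrite <- (Rabs_right (2 * r)), <- sup_scal by
        (lra || apply contI_bounded, T_cont; auto).
      apply sup_le; intros p.
      replace (2 * r * T z p) with (T (fun t => x t + r * z t) p
                                    - T (fun t => x t - r * z t) p)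
        by (rewrite (T_add x (fun t => r * z t)), (T_sub x (fun t => r * z t)),
              T_scal by auto; ring).
      eapply Rle_trans; [apply Rabs_triang|]; rewrite Rabs_Ropp.
      apply Rplus_le_compat; apply sup_ge, contI_bounded, T_cont; auto.
Qed.

End LinearOperator.

Lemma pow3_pos (n : nat) : 0 < (/3) ^ n.
Proof. apply pow_lt; lra. Qed.

Lemma lim_pow3 : is_lim_seq (fun k => (/3) ^ k / 2) 0.
Proof.
  replace (Finite 0) with (Rbar_mult 0 (/2)) by (simpl; f_equal; ring).
  apply is_lim_seq_scal_r, is_lim_seq_geom; rewrite Rabs_right; lra.
Qed.

Lemma limit_of_tail_bound (u b : nat -> R) :
  (forall k j, (k <= j)%nat -> Rabs (u j - u k) <= b k) -> is_lim_seq b 0 ->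
  exists l, forall k, Rabs (l - u k) <= b k.
Proof.
  intros Hc Hb.
  assert (Hcau : ex_lim_seq_cauchy u).
  { intros eps; apply is_lim_seq_spec in Hb.
    destruct (Hb (mkposreal (eps / 3) ltac:(destruct eps; simpl; lra))) as [N HN].
    exists N; intros n m Hn Hm; specialize (HN N (le_n _)); simpl in HN.
    rewrite Rminus_0_r in HN; pose proof (Hc N n Hn); pose proof (Hc N m Hm).
    replace (u n - u m) with ((u n - u N) - (u m - u N)) by ring.
    eapply Rle_lt_trans; [apply Rabs_triang|]; rewrite Rabs_Ropp.
    pose proof (Rle_abs (b N)); destruct eps; simpl in *; lra. }
  apply ex_lim_seq_cauchy_corr in Hcau.
  exists (Lim_seq u); intros k.
  assert (H1 : is_lim_seq (fun j => Rabs (u (j + k)%nat - u k)) (Rabs (Lim_seq u - u k))).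
  { apply (is_lim_seq_abs (fun j => u (j + k)%nat - u k) (Lim_seq u - u k)).
    apply is_lim_seq_minus'; [|apply is_lim_seq_const].
    apply (is_lim_seq_incr_n u k), Lim_seq_correct'; auto. }
  exact (is_lim_seq_le (fun j => Rabs (u (j + k)%nat - u k)) (fun _ => b k) _ _
           (fun j => Hc k (j + k)%nat ltac:(lia)) H1 (is_lim_seq_const (b k))).
Qed.

Lemma uniform_cauchy_limit (xs : nat -> I01 -> R) (b : nat -> R) :
  (forall k, contI (xs k)) ->
  (forall t k j, (k <= j)%nat -> Rabs (xs j t - xs k t) <= b k) -> is_lim_seq b 0 ->
  exists X, contI X /\ forall t k, Rabs (X t - xs k t) <= b k.
Proof.
  intros Hc Hcau Hb.
  assert (HX : forall t, exists l, forall k, Rabs (l - xs k t) <= b k)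
    by (intros t; apply limit_of_tail_bound; auto).
  destruct (choice _ HX) as [X HXk]; exists X; split; auto.
  intros x e He; apply is_lim_seq_spec in Hb.
  destruct (Hb (mkposreal (e / 3) ltac:(lra))) as [k Hk]; specialize (Hk k (le_n _)).
  simpl in Hk; rewrite Rminus_0_r in Hk; pose proof (Rle_abs (b k)).
  destruct (Hc k x (e / 3)) as [d [Hd Hy]]; [lra|]; exists d; split; auto.
  intros y Hyx; specialize (Hy y Hyx); pose proof (HXk y k); pose proof (HXk x k).
  replace (X y - X x) with ((X y - xs k y) + (xs k y - xs k x) - (X x - xs k x)) by ring.
  eapply Rle_lt_trans; [apply Rabs_triang|]; rewrite Rabs_Ropp.
  eapply Rle_lt_trans; [apply Rplus_le_compat_r, Rabs_triang|]; lra.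
Qed.

(* The gliding-hump series: x_0 = 0, x_(k+1) = x_k +/- 3^-(k+1) z_k with the
   sign chosen by [hump_step] for T_k, converges uniformly to a continuous X
   with ||X - x_k|| <= 3^-k / 2. *)
Lemma hump_series (T : nat -> (I01 -> R) -> (I01 -> R)) (z : nat -> I01 -> R) :
  (forall k, bdd_finrank_op (T k)) -> (forall k, contI (z k) /\ supnorm (z k) <= 1) ->
  exists (xs : nat -> I01 -> R) (X : I01 -> R), contI X /\ (forall k, contI (xs k)) /\
    (forall t k, Rabs (X t - xs k t) <= (/3) ^ k / 2) /\
    (forall k, (/3) ^ S k * supnorm (T k (z k)) <= supnorm (T k (xs (S k)))).
Proof.
  intros HT Hz.
  pose (xs := fix xs k := match k with
                          | O => fun _ => 0
                          | S k => hump_step (T k) (z k) ((/3) ^ S k) (xs k) end).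
  assert (Hstep : forall k, contI (xs k) -> contI (xs (S k)) /\
      (forall t, Rabs (xs (S k) t - xs k t) <= (/3) ^ S k) /\
      (/3) ^ S k * supnorm (T k (z k)) <= supnorm (T k (xs (S k)))).
  { intros k Hk; apply hump_step_spec; auto; try apply Hz; apply pow3_pos. }
  assert (Hxc : forall k, contI (xs k))
    by (induction k; [apply contI_const | apply Hstep; auto]).
  assert (Hcau : forall t k i, Rabs (xs (i + k)%nat t - xs k t)
                                 <= (/3) ^ k / 2 - (/3) ^ (i + k) / 2).
  { intros t k i; induction i.
    - rewrite Nat.add_0_l, Rminus_eq_0, Rabs_R0; lra.
    - change (S i + k)%nat with (S (i + k)).
      replace (xs (S (i + k)) t - xs k t)
        with ((xs (S (i + k)) t - xs (i + k)%nat t) + (xs (i + k)%nat t - xs k t)) by ring.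
      eapply Rle_trans; [apply Rabs_triang|].
      pose proof (proj1 (proj2 (Hstep (i + k)%nat (Hxc _))) t); simpl pow in *; lra. }
  destruct (uniform_cauchy_limit xs (fun k => (/3) ^ k / 2) Hxc) as [X [HXc HXk]];
    [|apply lim_pow3|].
  { intros t k j Hkj; replace j with ((j - k) + k)%nat by lia.
    pose proof (Hcau t k (j - k)%nat); pose proof (pow3_pos ((j - k) + k)); lra. }
  exists xs, X; repeat split; auto; intros k; apply Hstep, Hxc.
Qed.

Lemma gliding_hump (T : nat -> (I01 -> R) -> (I01 -> R)) (m : nat -> R)
    (z : nat -> I01 -> R) :
  (forall k, bdd_finrank_op (T k)) ->
  (forall k g, contI g -> supnorm (T k g) <= m k * supnorm g) ->
  (forall k, contI (z k) /\ supnorm (z k) <= 1 /\ 2/3 * m k < supnorm (T k (z k))) ->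
  (forall k, 6 * 3 ^ S k * (INR k + 1) < m k) ->
  exists X, contI X /\ forall k, INR k + 1 < supnorm (T k X).
Proof.
  intros HT Hm Hz Hbig.
  destruct (hump_series T z HT) as [xs [X [HXc [Hxc [HXk Hhumps]]]]];
    [intros k; split; apply Hz|].
  exists X; split; auto; intros k.
  set (r := (/3) ^ S k); assert (Hr : 0 < r) by apply pow3_pos.
  destruct (Hz k) as [_ [_ Hz23]]; pose proof (Hhumps k) as Hhump; fold r in Hhump.
  (* ||T X|| >= ||T x_(k+1)|| - m ||x_(k+1) - X|| >= r m (2/3 - 1/2) *)
  assert (Hdiff : supnorm (fun t => T k (xs (S k)) t - T k X t) <= m k * (r / 2)).
  { eapply Rle_trans; [apply (T_sup_sub (T k) (HT k)); auto|].
    apply Rmult_le_compat_l.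
    - apply Rle_trans with (6 * 3 ^ S k * (INR k + 1)); [|left; apply Hbig].
      pose proof (pos_INR k); pose proof (pow_lt 3 (S k) ltac:(lra)); nra.
    - apply sup_le; intros t; rewrite Rabs_minus_sym; apply HXk. }
  assert (Htri : supnorm (T k (xs (S k)))
                 <= supnorm (fun t => T k (xs (S k)) t - T k X t) + supnorm (T k X)).
  { apply sup_triang; [apply contI_bounded, contI_sub | apply contI_bounded |
      intros; ring]; apply (T_cont _ (HT k)); auto. }
  assert (Hr3 : r * (6 * 3 ^ S k * (INR k + 1)) = 6 * (INR k + 1)).
  { unfold r; replace ((/3) ^ S k * (6 * 3 ^ S k * (INR k + 1)))
      with (((/3) * 3) ^ S k * (6 * (INR k + 1))) by (rewrite Rpow_mult_distr; ring).
    rewrite Rinv_l, pow1 by lra; ring. }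
  assert (r * (6 * 3 ^ S k * (INR k + 1)) < r * m k)
    by (apply Rmult_lt_compat_l; auto).
  nra.
Qed.

Lemma uniform_boundedness (Q : nat -> (I01 -> R) -> (I01 -> R)) :
  (forall N, bdd_finrank_op (Q N)) ->
  (forall g, contI g -> exists B, forall N, supnorm (Q N g) <= B) ->
  exists M, 0 <= M /\ forall N g, contI g -> supnorm (Q N g) <= M * supnorm g.
Proof.
  intros hQ hpt.
  destruct (choice _ (fun N => op_norm_exists (Q N) (hQ N))) as [mN HmN].
  apply NNPP; intros Hn.
  assert (Hunb : forall B, exists N, B < mN N).
  { intros B; apply NNPP; intros Hb; apply Hn; exists (Rmax 0 B); split; [apply Rmax_l|].
    intros N g Hg; eapply Rle_trans; [apply HmN; auto|].
    apply Rmult_le_compat_r; [apply sup_nonneg|].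
    eapply Rle_trans; [|apply Rmax_r]; apply Rnot_lt_le; intros Hl; apply Hb; eauto. }
  assert (Hch : forall k : nat, exists p : nat * (I01 -> R),
     6 * 3 ^ S k * (INR k + 1) < mN (fst p) /\ contI (snd p) /\
     supnorm (snd p) <= 1 /\ 2/3 * mN (fst p) < supnorm (Q (fst p) (snd p))).
  { intros k; destruct (Hunb (6 * 3 ^ S k * (INR k + 1))) as [N HN].
    assert (0 < 6 * 3 ^ S k * (INR k + 1)).
    { pose proof (pos_INR k); pose proof (pow_lt 3 (S k) ltac:(lra)); nra. }
    destruct (proj2 (proj2 (HmN N)) (2/3 * mN N)) as [z Hz]; [lra|].
    exists (N, z); simpl; tauto. }
  destruct (choice _ Hch) as [p Hp].
  destruct (gliding_hump (fun k => Q (fst (p k))) (fun k => mN (fst (p k)))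
              (fun k => snd (p k))) as [X [HXc HX]].
  - intros k; apply hQ.
  - intros k; apply HmN.
  - intros k; apply Hp.
  - intros k; apply Hp.
  - destruct (hpt X HXc) as [B HB]; destruct (INR_unbounded B) as [k Hk].
    specialize (HX k); specialize (HB (fst (p k))); lra.
Qed.

Lemma strong_to_id_bounded (Q : nat -> (I01 -> R) -> (I01 -> R)) :
  (forall N, bdd_finrank_op (Q N)) -> strong_to_id Q ->
  forall g, contI g -> exists B, forall N, supnorm (Q N g) <= B.
Proof.
  intros hQ hQs g Hg.
  assert (Hl := hQs g Hg); apply is_lim_seq_spec in Hl.
  destruct (Hl (mkposreal 1 Rlt_0_1)) as [N0 HN0]; simpl in HN0.
  assert (Hfin : forall n, exists B, forall N, (N < n)%nat -> supnorm (Q N g) <= B).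
  { induction n as [|n [B HB]]; [exists 0; intros; lia|].
    exists (Rmax B (supnorm (Q n g))); intros N HN.
    destruct (Nat.eq_dec N n) as [->|]; [apply Rmax_r|].
    eapply Rle_trans; [apply HB; lia | apply Rmax_l]. }
  destruct (Hfin N0) as [B HB]; exists (Rmax B (supnorm g + 1)); intros N.
  destruct (Nat.lt_ge_cases N N0); [eapply Rle_trans; [apply HB; auto | apply Rmax_l]|].
  eapply Rle_trans; [|apply Rmax_r]; specialize (HN0 N ltac:(lia)).
  rewrite Rminus_0_r in HN0; pose proof (Rle_abs (supnorm (fun x => Q N g x - g x))).
  assert (supnorm (Q N g) <= supnorm (fun x => Q N g x - g x) + supnorm g); [|lra].
  apply sup_triang; [apply contI_bounded, contI_sub | apply contI_bounded | intros; ring];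
    try apply (T_cont _ (hQ N)); auto.
Qed.

(** * Subsequences and sequential compactness *)

Definition incr (psi : nat -> nat) : Prop := forall n, (psi n < psi (S n))%nat.

Lemma incr_mono (psi : nat -> nat) : incr psi ->
  forall m n, (m < n)%nat -> (psi m < psi n)%nat.
Proof.
  intros H m n Hmn; induction n; [lia|].
  destruct (Nat.eq_dec m n) as [->|]; [apply H|].
  specialize (IHn ltac:(lia)); specialize (H n); lia.
Qed.

Lemma incr_ge (psi : nat -> nat) : incr psi -> forall n, (n <= psi n)%nat.
Proof. intros H n; induction n; [lia|]; specialize (H n); lia. Qed.

Lemma incr_comp (p1 p2 : nat -> nat) : incr p1 -> incr p2 -> incr (fun n => p1 (p2 n)).
Proof. intros H1 H2 n; apply incr_mono; auto. Qed.

Lemma inv_small (e : R) : 0 < e -> exists N, forall n, (N <= n)%nat -> / INR (S n) < e.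
Proof.
  intros He; destruct (INR_unbounded (/ e)) as [N HN]; exists N; intros n Hn.
  assert (INR N <= INR n) by (apply le_INR; auto).
  rewrite S_INR; pose proof (pos_INR n).
  apply (Rmult_lt_reg_l (INR n + 1)); [lra|]; rewrite Rinv_r by lra.
  apply (Rmult_lt_reg_l (/ e)); [apply Rinv_0_lt_compat; auto|].
  rewrite Rmult_1_r, (Rmult_comm (INR n + 1)), <- Rmult_assoc, Rinv_l, Rmult_1_l by lra.
  lra.
Qed.

Lemma extract (d : nat -> R) :
  (forall e, 0 < e -> forall N, exists n, (N <= n)%nat /\ d n < e) ->
  exists psi, incr psi /\ forall n, d (psi n) < / INR (S n).
Proof.
  intros H.
  assert (H' : forall N k, exists n, (N <= n)%nat /\ d n < / INR (S k)).
  { intros N k; apply H, Rinv_0_lt_compat, lt_0_INR; lia. }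
  destruct (choice (fun (Nk : nat * nat) n => (fst Nk <= n)%nat /\ d n < / INR (S (snd Nk))))
    as [nx Hnx]; [intros [N k]; apply H'|].
  pose (psi := fix psi n := match n with
                            | O => nx (O, O)
                            | S m => nx (S (psi m), S m) end).
  exists psi; split.
  - intros n; simpl; pose proof (Hnx (S (psi n), S n)); simpl in *; lia.
  - intros [|n]; [apply (Hnx (O, O)) | apply (Hnx (S (psi n), S n))].
Qed.

Lemma lim_of_inv (w : nat -> R) (l : R) :
  (forall n, Rabs (w n - l) < / INR (S n)) -> is_lim_seq w l.
Proof.
  intros H; apply is_lim_seq_spec; intros [e He].
  destruct (inv_small e He) as [N HN]; exists N; intros n Hn; simpl.
  eapply Rlt_trans; [apply H | apply HN; auto].
Qed.

Lemma bolzano_weierstrass (v : nat -> R) (B : R) : (forall n, Rabs (v n) <= B) ->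
  exists psi (l : R), incr psi /\ is_lim_seq (fun n => v (psi n)) l.
Proof.
  intros HB.
  destruct (Bolzano_Weierstrass v (fun c => -B <= c <= B) (compact_P3 (-B) B)) as [l Hl].
  { intros n; specialize (HB n); revert HB; unfold Rabs; destruct Rcase_abs; lra. }
  destruct (extract (fun n => Rabs (v n - l))) as [psi [Hi Hp]].
  { intros e He N; destruct (Hl (disc l (mkposreal e He)) N) as [p [Hp Hv]].
    - exists (mkposreal e He); intros x Hx; exact Hx.
    - exists p; split; auto. }
  exists psi, l; split; [auto | apply lim_of_inv; auto].
Qed.

Lemma bolzano_weierstrass_finite {A : Type} (ps : list (I01 * A))
    (u : nat -> I01 -> R) (B : R) :
  (forall n x, Rabs (u n x) <= B) ->
  exists psi, incr psi /\
    forall p, In p ps -> ex_finite_lim_seq (fun n => u (psi n) (fst p)).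
Proof.
  intros HB; induction ps as [|p ps IH].
  - exists (fun n => n); split; [intros n; lia | intros p []].
  - destruct IH as [psi1 [Hi1 Hl1]].
    destruct (bolzano_weierstrass (fun n => u (psi1 n) (fst p)) B) as [psi2 [l [Hi2 Hl2]]];
      [intros; apply HB|].
    exists (fun n => psi1 (psi2 n)); split; [apply incr_comp; auto|].
    intros q [<-|Hq]; [exists l; exact Hl2|].
    destruct (Hl1 q Hq) as [l' Hl']; exists l'.
    apply (is_lim_seq_subseq (fun n => u (psi1 n) (fst q)) l' psi2); auto.
    apply eventually_subseq; auto.
Qed.

Lemma lims_eventually {A : Type} (ps : list (I01 * A)) (s : I01 -> nat -> R)
    (l : I01 -> R) :
  (forall p, In p ps -> is_lim_seq (s (fst p)) (l (fst p))) ->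
  forall e, 0 < e -> exists N0, forall n, (N0 <= n)%nat ->
    forall p, In p ps -> Rabs (s (fst p) n - l (fst p)) < e.
Proof.
  intros H e He; induction ps as [|p ps IH]; [exists O; intros n _ p []|].
  destruct IH as [N1 HN1]; [intros q Hq; apply H; right; auto|].
  assert (Hp := H p (or_introl eq_refl)); apply is_lim_seq_spec in Hp.
  destruct (Hp (mkposreal e He)) as [N2 HN2].
  exists (max N1 N2); intros n Hn q [<-|Hq]; [apply HN2 | apply HN1; auto]; lia.
Qed.

Definition unif (u : nat -> I01 -> R) (U : I01 -> R) : Prop :=
  forall e, 0 < e -> exists N0, forall n, (N0 <= n)%nat -> forall x, Rabs (u n x - U x) <= e.

Lemma unif_sub (u : nat -> I01 -> R) (U : I01 -> R) (phi : nat -> nat) :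
  unif u U -> incr phi -> unif (fun n => u (phi n)) U.
Proof.
  intros Hu Hi e He; destruct (Hu e He) as [N0 HN0]; exists N0; intros n Hn x.
  apply HN0; pose proof (incr_ge phi Hi n); lia.
Qed.

Lemma list_max {J : Type} (l : list J) (f : J -> nat) :
  exists N, forall j, In j l -> (f j <= N)%nat.
Proof.
  induction l as [|j l [N HN]]; [exists O; intros j []|].
  exists (max (f j) N); intros i [<-|Hi]; [lia | specialize (HN i Hi); lia].
Qed.

(* A sequence in a compact set has a cluster point in it: otherwise the balls
   around each point eventually avoided by the sequence would form an open
   cover without finite subcover. *)
Lemma compact_cluster (K : (I01 -> R) -> Prop) (a : nat -> I01 -> R) :
  compactC K -> (forall n, K (a n)) ->
  exists A, K A /\ forall e, 0 < e -> forall N, exists n, (N <= n)%nat /\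
    supnorm (fun x => a n x - A x) < e.
Proof.
  intros [Kc Hcov] Ha; apply NNPP; intros Hn.
  assert (H : forall j : {A | K A}, exists p : R * nat, 0 < fst p /\
    forall n, (snd p <= n)%nat -> fst p <= supnorm (fun x => a n x - proj1_sig j x)).
  { intros [A KA]; simpl; apply NNPP; intros Hn2; apply Hn; exists A; split; auto.
    intros e He N; apply NNPP; intros Hn3; apply Hn2; exists (e, N); simpl; split; auto.
    intros n Hn4; apply Rnot_lt_le; intros Hlt; apply Hn3; exists n; auto. }
  destruct (choice _ H) as [pj Hpj].
  destruct (Hcov {A | K A}
    (fun j h => contI h /\ supnorm (fun x => h x - proj1_sig j x) < fst (pj j)))
    as [l Hl].
  - intros j h [Hh Hlt].
    exists (fst (pj j) - supnorm (fun x => h x - proj1_sig j x)); split; [lra|].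
    intros h' Hh' Hlt'; split; auto.
    assert (Kj := Kc _ (proj2_sig j)).
    eapply Rle_lt_trans;
      [apply (sup_triang (fun x => h' x - h x) (fun x => h x - proj1_sig j x)) | lra];
      [apply contI_bounded, contI_sub; auto .. | intros; ring].
  - intros g Kg; exists (exist _ g Kg); split; [apply Kc; auto|]; simpl.
    eapply Rle_lt_trans; [|apply (Hpj (exist _ g Kg))].
    apply sup_le; intros x; rewrite Rminus_eq_0, Rabs_R0; lra.
  - destruct (list_max l (fun j => snd (pj j))) as [N HN].
    destruct (Hl (a N) (Ha N)) as [j [Hj [_ Hlt]]].
    pose proof (proj2 (Hpj j) N (HN j Hj)); lra.
Qed.

Lemma compact_subseq (K : (I01 -> R) -> Prop) (a : nat -> I01 -> R) :
  compactC K -> (forall n, K (a n)) ->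
  exists psi A, incr psi /\ K A /\ unif (fun n => a (psi n)) A.
Proof.
  intros HK Ha; destruct (compact_cluster K a HK Ha) as [A [KA Hcl]].
  destruct (extract (fun n => supnorm (fun x => a n x - A x)) Hcl) as [psi [Hi Hp]].
  exists psi, A; split; [auto | split; auto].
  intros e He; destruct (inv_small e He) as [N HN]; exists N; intros n Hn x.
  left; eapply Rle_lt_trans; [|apply (HN n Hn)].
  eapply Rle_trans; [apply sup_ge_sub; apply (proj1 HK); auto | left; apply Hp].
Qed.

(** * Finite-dimensional spaces of continuous functions *)

Fixpoint sumI (ps : list (I01 * (I01 -> R))) (g : I01 -> R) (x : I01) : R :=
  match ps with
  | nil => 0
  | p :: ps' => g (fst p) * snd p x + sumI ps' g x
  end.

Definition spanl (l : list (I01 -> R)) (g : I01 -> R) : Prop :=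
  exists c, forall x, g x = lincomb l c x.

Definition subsp (V : (I01 -> R) -> Prop) : Prop :=
  (forall g, V g -> contI g) /\ (forall g h, V g -> V h -> V (fun x => g x + h x)) /\
  (forall c g, V g -> V (fun x => c * g x)).

Lemma lincomb_nil (l : list (I01 -> R)) (x : I01) : lincomb l nil x = 0.
Proof. destruct l; reflexivity. Qed.

Lemma lincomb_map (l : list (I01 -> R)) (e : I01 -> R) (x1 : I01) (c : list R) (x : I01) :
  lincomb (map (fun h => fun y => h y - h x1 / e x1 * e y) l) c x
  = lincomb l c x - lincomb l c x1 / e x1 * e x.
Proof.
  revert c; induction l as [|h l IH]; intros [|a c]; simpl; try (unfold Rdiv; ring).
  rewrite IH; unfold Rdiv; ring.
Qed.

Lemma span_remove (l : list (I01 -> R)) (e : I01 -> R) (x1 : I01) :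
  In e l -> e x1 <> 0 -> exists l', length l' = pred (length l) /\
  forall c, exists c', forall x,
    lincomb l c x - lincomb l c x1 / e x1 * e x = lincomb l' c' x.
Proof.
  intros Hin Hne; induction l as [|e0 l0 IH]; [destruct Hin|].
  destruct Hin as [->|Hin].
  - exists (map (fun h => fun y => h y - h x1 / e x1 * e y) l0).
    split; [rewrite length_map; reflexivity|]; intros [|a c].
    + exists nil; intros x; rewrite !lincomb_nil; unfold Rdiv; ring.
    + exists c; intros x; rewrite lincomb_map; simpl; field; auto.
  - destruct (IH Hin) as [l0' [Hlen Hc]].
    exists ((fun y => e0 y - e0 x1 / e x1 * e y) :: l0'); split.
    { simpl; rewrite Hlen; destruct l0; [destruct Hin | reflexivity]. }
    intros [|a c].
    + exists nil; intros x; rewrite !lincomb_nil; unfold Rdiv; ring.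
    + destruct (Hc c) as [c' Hc']; exists (a :: c'); intros x; simpl.
      rewrite <- Hc'; unfold Rdiv; ring.
Qed.

Lemma lincomb_nz (l : list (I01 -> R)) (c : list R) (x1 : I01) :
  lincomb l c x1 <> 0 -> exists e, In e l /\ e x1 <> 0.
Proof.
  revert c; induction l as [|h l IH]; intros [|a c]; simpl; try lra.
  intros H; destruct (Req_dec (h x1) 0) as [H0|H0]; [|exists h; auto].
  destruct (IH c) as [e [He1 He2]]; [rewrite H0 in H; lra | exists e; auto].
Qed.

Lemma sumI_cont (ps : list (I01 * (I01 -> R))) (g : I01 -> R) :
  (forall p, In p ps -> contI (snd p)) -> contI (sumI ps g).
Proof.
  induction ps as [|p ps IH]; intros H; simpl; [apply contI_const|].
  apply (contI_add (fun x => g (fst p) * snd p x) (sumI ps g)).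
  - apply contI_scal, H; left; reflexivity.
  - apply IH; intros q Hq; apply H; right; exact Hq.
Qed.

Lemma sumI_lin (ps : list (I01 * (I01 -> R))) (g h : I01 -> R) (c : R) (x : I01) :
  sumI ps (fun y => g y + c * h y) x = sumI ps g x + c * sumI ps h x.
Proof. induction ps; simpl; [ring|]; rewrite IHps; ring. Qed.

(* By
   induction on the number of spanning functions: pick g1 in V and x1 with
   g1(x1) <> 0, and recurse on the subspace of V vanishing at x1. *)
Lemma interpolation (l : list (I01 -> R)) (V : (I01 -> R) -> Prop) :
  subsp V -> (forall g, V g -> spanl l g) ->
  exists ps, (forall p, In p ps -> contI (snd p)) /\
    forall g, V g -> forall x, g x = sumI ps g x.
Proof.
  remember (length l) as n eqn:Hlen; revert l V Hlen.
  induction n as [|n IH]; intros l V Hlen [Vc [Va Vs]] Hsp.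
  - exists nil; split; [intros p []|]; intros g Hg x.
    destruct (Hsp g Hg) as [c Hc]; rewrite Hc.
    destruct l; [reflexivity | discriminate].
  - destruct (classic (forall g, V g -> forall x, g x = 0)) as [Hz|Hnz].
    { exists nil; split; [intros p [] | intros g Hg x; simpl; auto]. }
    apply not_all_ex_not in Hnz; destruct Hnz as [g1 Hg1].
    apply imply_to_and in Hg1; destruct Hg1 as [Vg1 Hg1].
    apply not_all_ex_not in Hg1; destruct Hg1 as [x1 Hx1].
    pose (u1 := fun x => / g1 x1 * g1 x).
    assert (Vu1 : V u1) by (apply Vs; auto).
    assert (Hu1 : u1 x1 = 1) by (unfold u1; field; auto).
    destruct (Hsp g1 Vg1) as [c1 Hc1].
    destruct (lincomb_nz l c1 x1) as [e [Hine Hex]]; [rewrite <- Hc1; auto|].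
    destruct (span_remove l e x1 Hine Hex) as [l' [Hlen' Hrem]].
    destruct (IH l' (fun g => V g /\ g x1 = 0)) as [ps' [Hps'c Hps']].
    + rewrite Hlen', <- Hlen; reflexivity.
    + split; [|split].
      * intros g [Vg _]; auto.
      * intros g h [Vg Hg] [Vh Hh]; split; auto; rewrite Hg, Hh; ring.
      * intros c g [Vg Hg]; split; auto; rewrite Hg; ring.
    + intros g [Vg Hg0]; destruct (Hsp g Vg) as [c Hc]; destruct (Hrem c) as [c' Hc'].
      exists c'; intros x; rewrite <- Hc', <- !Hc, Hg0; unfold Rdiv; ring.
    + exists ((x1, fun x => u1 x - sumI ps' u1 x) :: ps'); split.
      * intros p [<-|Hp]; auto; simpl; apply contI_sub; [apply Vc; auto|].
        apply sumI_cont; auto.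
      * intros g Vg x; simpl.
        assert (Hw : V (fun y => g y + - g x1 * u1 y) /\ g x1 + - g x1 * u1 x1 = 0).
        { split; [apply Va, Vs; auto | rewrite Hu1; ring]. }
        pose proof (Hps' _ Hw x) as Hx; rewrite sumI_lin in Hx; lra.
Qed.

Lemma sumI_bound (ps : list (I01 * (I01 -> R))) :
  (forall p, In p ps -> contI (snd p)) -> exists K, 0 <= K /\
  forall g d x, 0 <= d -> (forall p, In p ps -> Rabs (g (fst p)) <= d) ->
    Rabs (sumI ps g x) <= d * K.
Proof.
  induction ps as [|p ps IH]; intros Hc.
  - exists 0; split; [lra|]; intros; simpl; rewrite Rabs_R0; lra.
  - destruct IH as [K [HK HK']]; [intros; apply Hc; right; auto|].
    destruct (contI_bounded (snd p) (Hc p (or_introl eq_refl))) as [Mp HMp].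
    assert (0 <= Mp) by (eapply Rle_trans; [apply Rabs_pos | apply (HMp pt0)]).
    exists (Mp + K); split; [lra|]; intros g d x Hd Hg; simpl.
    eapply Rle_trans; [apply Rabs_triang|]; rewrite Rabs_mult.
    assert (Rabs (g (fst p)) * Rabs (snd p x) <= d * Mp).
    { apply Rmult_le_compat; try apply Rabs_pos; [apply Hg; left; reflexivity | apply HMp]. }
    assert (Rabs (sumI ps g x) <= d * K)
      by (apply HK'; auto; intros q Hq; apply Hg; right; exact Hq).
    lra.
Qed.

(* Bounded sequences in a finitely spanned space of continuous functions have
   uniformly convergent subsequences: pointwise convergence at the finitely
   many interpolation nodes suffices. *)
Lemma findim_compact (l : list (I01 -> R)) (V : (I01 -> R) -> Prop)
    (u : nat -> I01 -> R) (B : R) :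
  subsp V -> (forall g, V g -> spanl l g) ->
  (forall n, V (u n)) -> (forall n x, Rabs (u n x) <= B) ->
  exists psi H, incr psi /\ contI H /\ unif (fun n => u (psi n)) H.
Proof.
  intros HV Hsp Hu HB.
  destruct (interpolation l V HV Hsp) as [ps [Hpc Hps]].
  destruct (bolzano_weierstrass_finite ps u B HB) as [psi [Hi Hl]].
  pose (cf := fun y => Lim_seq (fun n => u (psi n) y)).
  exists psi, (sumI ps cf); split; [auto | split; [apply sumI_cont; auto|]].
  destruct (sumI_bound ps Hpc) as [K [HK HK']]; intros e He.
  assert (Hd : 0 < e / (K + 1)) by (apply Rdiv_lt_0_compat; lra).
  destruct (lims_eventually ps (fun y n => u (psi n) y) cf) with (e := e / (K + 1))
    as [N0 HN0]; auto.
  { intros p Hp; apply Lim_seq_correct'; auto. }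
  exists N0; intros n Hn x.
  replace (u (psi n) x - sumI ps cf x)
    with (sumI ps (fun y => u (psi n) y + (-1) * cf y) x)
    by (rewrite sumI_lin, <- (Hps _ (Hu (psi n))); ring).
  eapply Rle_trans; [apply (HK' _ (e / (K + 1))); [lra|]|].
  { intros p Hp; left; replace (u (psi n) (fst p) + -1 * cf (fst p))
      with (u (psi n) (fst p) - cf (fst p)) by ring; apply HN0; auto. }
  apply Rle_trans with (e / (K + 1) * (K + 1)); [apply Rmult_le_compat_l; lra|].
  right; field; lra.
Qed.

(** * The integral operator F *)

Lemma contI_zero_interior (g : I01 -> R) : contI g ->
  (forall y, 0 < y < 1 -> g (clamp y) = 0) -> forall x, g x = 0.
Proof.
  intros Hg Hin x; apply NNPP; intros Hx.
  assert (He : 0 < Rabs (g x)) by (apply Rabs_pos_lt; auto).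
  destruct (Hg x _ He) as [d [Hd Hy]].
  destruct x as [x0 Hx0]; set (t := Rmin 1 (d / 2)).
  assert (Ht : 0 < t <= 1) by (unfold t, Rmin; destruct Rle_dec; lra).
  assert (Htd : t < d) by (unfold t, Rmin; destruct Rle_dec; lra).
  set (y0 := (1 - t) * x0 + t / 2).
  assert (Hy0 : 0 < y0 < 1) by (unfold y0; nra).
  assert (Hyd : Rabs (proj1_sig (clamp y0) - x0) < d).
  { rewrite clamp_val by lra; unfold y0.
    replace ((1 - t) * x0 + t / 2 - x0) with (t * (1/2 - x0)) by field.
    rewrite Rabs_mult, Rabs_right by lra.
    assert (Rabs (1/2 - x0) <= 1/2) by (unfold Rabs; destruct Rcase_abs; lra); nra. }
  specialize (Hy (clamp y0) Hyd); rewrite Hin, Rminus_0_l, Rabs_Ropp in Hy by auto; lra.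
Qed.

Lemma continuous_Rmult (u v : R -> R) (z : R) :
  continuous u z -> continuous v z -> continuous (fun y => u y * v y) z.
Proof. exact (continuous_mult (K:=R_AbsRing) u v z). Qed.

Lemma ex_RInt_cont (k : R -> R) (a b : R) : (forall z, continuous k z) -> ex_RInt k a b.
Proof. intros H; apply (ex_RInt_continuous (V:=R_CompleteNormedModule)); auto. Qed.

Lemma RInt_cont (k : R -> R) (y : R) : (forall z, continuous k z) ->
  continuous (fun y => RInt k 0 y) y.
Proof.
  intros Hc; apply (continuous_RInt_1 k 0 y (fun z => RInt k 0 z)).
  apply filter_forall; intros z; apply (RInt_correct (V:=R_CompleteNormedModule)).
  apply ex_RInt_cont; auto.
Qed.

Lemma contI_RInt (k : R -> R) : (forall z, continuous k z) ->
  contI (fun x => RInt k 0 (proj1_sig x)).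
Proof. intros Hc; apply (contI_R (fun y => RInt k 0 y)); intros; apply RInt_cont; auto. Qed.

Lemma RInt_zero_integrand (k : R -> R) : (forall z, continuous k z) ->
  (forall y, 0 <= y <= 1 -> RInt k 0 y = 0) -> forall y0, 0 < y0 < 1 -> k y0 = 0.
Proof.
  intros Hc H0 y0 Hy0.
  rewrite <- (Derive_RInt k 0 y0)
    by (auto; apply filter_forall; intros; apply ex_RInt_cont; auto).
  rewrite <- (Derive_const 0 y0) at 2; apply Derive_ext_loc.
  assert (Hep : 0 < Rmin y0 (1 - y0)) by (apply Rmin_pos; lra).
  exists (mkposreal _ Hep); intros y Hy; simpl in Hy.
  unfold ball in Hy; simpl in Hy; unfold AbsRing_ball, abs, minus, plus, opp in Hy.
  simpl in Hy; apply H0; clear -Hy Hy0; revert Hy.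
  unfold Rmin; destruct Rle_dec; unfold Rabs; destruct Rcase_abs; lra.
Qed.

Lemma RInt_close (k1 k2 : R -> R) (y B : R) : (forall z, continuous k1 z) ->
  (forall z, continuous k2 z) -> 0 <= y <= 1 ->
  (forall z, 0 <= z <= y -> Rabs (k1 z - k2 z) <= B) ->
  Rabs (RInt k1 0 y - RInt k2 0 y) <= B.
Proof.
  intros H1 H2 Hy HB.
  assert (HB0 : 0 <= B) by (eapply Rle_trans; [apply Rabs_pos | apply (HB 0); lra]).
  rewrite <- (RInt_minus (V:=R_CompleteNormedModule)) by (apply ex_RInt_cont; auto).
  eapply Rle_trans; [apply abs_RInt_le_const; [lra | |]|].
  - apply (ex_RInt_minus (V:=R_CompleteNormedModule)); apply ex_RInt_cont; auto.
  - intros t Ht; apply HB; lra.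
  - nra.
Qed.

Lemma kernel_value_lipschitz (g h b1 b2 H B1 B2 d lam Gm Hm Am : R) : 0 < lam ->
  Rabs g <= Gm -> Rabs H <= Hm -> lam < b1 -> lam < b2 -> lam < B1 -> lam < B2 ->
  Rabs B1 <= Am -> Rabs B2 <= Am ->
  Rabs (h - H) <= d -> Rabs (b1 - B1) <= d -> Rabs (b2 - B2) <= d -> 0 <= d <= 1 ->
  Rabs (- (g * h) / (b1 * b2) - - (g * H) / (B1 * B2))
    <= Gm * (/ (lam * lam) + Hm * (2 * Am + 1) / (lam * lam * (lam * lam))) * d.
Proof.
  intros Hl Hg HH Hb1 Hb2 HB1 HB2 HA1 HA2 Hh Hd1 Hd2 Hd.
  assert (Hl2 : 0 < lam * lam) by nra.
  assert (HP : lam * lam <= b1 * b2) by nra.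
  assert (HQ : lam * lam <= B1 * B2) by nra.
  assert (Hgm : 0 <= Gm) by (eapply Rle_trans; [apply Rabs_pos | eauto]).
  assert (Hhm : 0 <= Hm) by (eapply Rle_trans; [apply Rabs_pos | eauto]).
  assert (Ham : 0 <= Am) by (eapply Rle_trans; [apply Rabs_pos | eauto]).
  (* Split the difference into a variation in h and a variation in b1 b2. *)
  replace (- (g * h) / (b1 * b2) - - (g * H) / (B1 * B2)) with
    (- g * ((h - H) / (b1 * b2)
            + H * ((B1 * (B2 - b2) + b2 * (B1 - b1)) / ((b1 * b2) * (B1 * B2)))))
    by (field; split; lra).
  rewrite Rabs_mult, Rabs_Ropp.
  assert (T1 : Rabs ((h - H) / (b1 * b2)) <= d / (lam * lam)).
  { unfold Rdiv; rewrite Rabs_mult, Rabs_inv, (Rabs_right (b1 * b2)) by lra.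
    apply Rmult_le_compat; auto; [apply Rabs_pos | left; apply Rinv_0_lt_compat; lra |].
    apply Rinv_le_contravar; lra. }
  assert (Hb2a : Rabs b2 <= Am + 1).
  { replace b2 with ((b2 - B2) + B2) by ring.
    eapply Rle_trans; [apply Rabs_triang | lra]. }
  assert (T2 : Rabs (B1 * (B2 - b2) + b2 * (B1 - b1)) <= (2 * Am + 1) * d).
  { eapply Rle_trans; [apply Rabs_triang|].
    rewrite !Rabs_mult, (Rabs_minus_sym B2), (Rabs_minus_sym B1).
    assert (Rabs B1 * Rabs (b2 - B2) <= Am * d)
      by (apply Rmult_le_compat; auto; apply Rabs_pos).
    assert (Rabs b2 * Rabs (b1 - B1) <= (Am + 1) * d)
      by (apply Rmult_le_compat; auto; apply Rabs_pos).
    lra. }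
  assert (T3 : Rabs (H * ((B1 * (B2 - b2) + b2 * (B1 - b1)) / ((b1 * b2) * (B1 * B2))))
               <= Hm * ((2 * Am + 1) * d / (lam * lam * (lam * lam)))).
  { rewrite Rabs_mult; apply Rmult_le_compat; auto; try apply Rabs_pos.
    unfold Rdiv; rewrite Rabs_mult, Rabs_inv, (Rabs_right (b1 * b2 * (B1 * B2))) by nra.
    apply Rmult_le_compat; auto; [apply Rabs_pos | left; apply Rinv_0_lt_compat; nra |].
    apply Rinv_le_contravar; [nra | apply Rmult_le_compat; lra]. }
  eapply Rle_trans; [apply Rmult_le_compat; [apply Rabs_pos | apply Rabs_pos | exact Hg |]|].
  - eapply Rle_trans; [apply Rabs_triang | apply Rplus_le_compat; [exact T1 | exact T3]].
  - right; unfold Rdiv; field; lra.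
Qed.

Definition Gf (f : I01 -> R) (z : R) : R := RInt (ext f) 0 z.

(* The kernel of the difference quotients of F: for h = c (b1 - b2) its
   primitive is c (F b1 - F b2) (see [Fop_diff]); for b1 = b2 = a it is the
   derivative of F at a in direction h. *)
Definition ker (f h b1 b2 : I01 -> R) (z : R) : R :=
  - (Gf f z * ext h z) / (ext b1 z * ext b2 z).

Section IntegralOperator.
Variable f : I01 -> R.
Hypothesis hf : contI f.
Variable fM : R.
Hypothesis hfM : forall x, Rabs (f x) <= fM.
Variable lam : R.
Hypothesis hlam : 0 < lam.

Lemma G_cont (z : R) : continuous (Gf f) z.
Proof. apply RInt_cont; intros; apply ext_cont; auto. Qed.

Lemma G_bound (z : R) : 0 <= z <= 1 -> Rabs (Gf f z) <= fM.
Proof.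
  intros Hz; unfold Gf.
  eapply Rle_trans; [apply abs_RInt_le_const; [lra | | intros; apply hfM]|].
  - apply ex_RInt_cont; intros; apply ext_cont; auto.
  - pose proof (Rle_trans _ _ _ (Rabs_pos _) (hfM pt0)); nra.
Qed.

Lemma G_pos (z : R) : (forall x, 0 < f x) -> 0 < z -> 0 < Gf f z.
Proof.
  intros hfpos Hz; unfold Gf; apply RInt_gt_0; auto; intros;
    [apply hfpos | apply ext_cont; auto].
Qed.

Lemma ker_cont (h b1 b2 : I01 -> R) : contI h -> contI b1 -> contI b2 ->
  (forall x, lam < b1 x) -> (forall x, lam < b2 x) -> forall z, continuous (ker f h b1 b2) z.
Proof.
  intros Hh Hb1 Hb2 Hp1 Hp2 z; unfold ker, Rdiv.
  apply continuous_Rmult;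
    [apply (continuous_opp (V:=R_NormedModule)) | apply continuous_Rinv_comp].
  - apply continuous_Rmult; [apply G_cont | apply ext_cont; auto].
  - apply continuous_Rmult; apply ext_cont; auto.
  - unfold ext; specialize (Hp1 (clamp z)); specialize (Hp2 (clamp z)); nra.
Qed.

Lemma Fint_cont (a : I01 -> R) : contI a -> (forall x, lam < a x) ->
  forall z, continuous (fun z => Gf f z / ext a z) z.
Proof.
  intros Ha Hp z; apply continuous_Rmult; [apply G_cont | apply continuous_Rinv_comp].
  - apply ext_cont; auto.
  - unfold ext; specialize (Hp (clamp z)); lra.
Qed.

Lemma Fop_cont (a : I01 -> R) : contI a -> (forall x, lam < a x) -> contI (Fop f a).
Proof. intros Ha Hp; apply contI_RInt, Fint_cont; auto. Qed.

Lemma Fop_diff (a1 a2 : I01 -> R) (c : R) : contI a1 -> contI a2 ->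
  (forall x, lam < a1 x) -> (forall x, lam < a2 x) -> forall x,
  c * (Fop f a1 x - Fop f a2 x)
  = RInt (ker f (fun y => c * (a1 y - a2 y)) a1 a2) 0 (proj1_sig x).
Proof.
  intros Ha1 Ha2 Hp1 Hp2 x; unfold Fop.
  assert (E1 := ex_RInt_cont _ 0 (proj1_sig x) (Fint_cont a1 Ha1 Hp1)).
  assert (E2 := ex_RInt_cont _ 0 (proj1_sig x) (Fint_cont a2 Ha2 Hp2)).
  rewrite <- (RInt_minus (V:=R_CompleteNormedModule)) by auto.
  rewrite <- (RInt_scal (V:=R_CompleteNormedModule))
    by (apply (ex_RInt_minus (V:=R_CompleteNormedModule)); auto).
  apply RInt_ext; intros z _; unfold scal, minus, plus, opp; simpl; unfold mult; simpl.
  unfold ker, Gf, ext; specialize (Hp1 (clamp z)); specialize (Hp2 (clamp z)).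
  field; lra.
Qed.

Lemma ker_integral_unif (h b1 b2 : nat -> I01 -> R) (H B1 B2 : I01 -> R) :
  (forall n, contI (h n) /\ contI (b1 n) /\ contI (b2 n)) ->
  contI H -> contI B1 -> contI B2 ->
  (forall n x, lam < b1 n x /\ lam < b2 n x) -> (forall x, lam < B1 x /\ lam < B2 x) ->
  unif h H -> unif b1 B1 -> unif b2 B2 ->
  unif (fun n x => RInt (ker f (h n) (b1 n) (b2 n)) 0 (proj1_sig x))
       (fun x => RInt (ker f H B1 B2) 0 (proj1_sig x)).
Proof.
  intros Hc HHc HB1c HB2c Hp HP Uh Ub1 Ub2.
  destruct (contI_bounded H HHc) as [Hm HHm].
  destruct (contI_bounded B1 HB1c) as [Am1 HAm1].
  destruct (contI_bounded B2 HB2c) as [Am2 HAm2].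
  set (Am := Rmax Am1 Am2).
  assert (HA1m : forall x, Rabs (B1 x) <= Am)
    by (intros x; eapply Rle_trans; [apply HAm1 | apply Rmax_l]).
  assert (HA2m : forall x, Rabs (B2 x) <= Am)
    by (intros x; eapply Rle_trans; [apply HAm2 | apply Rmax_r]).
  assert (Hm0 : 0 <= Hm) by (eapply Rle_trans; [apply Rabs_pos | apply (HHm pt0)]).
  assert (Am0 : 0 <= Am) by (eapply Rle_trans; [apply Rabs_pos | apply (HA1m pt0)]).
  assert (fM0 : 0 <= fM) by (eapply Rle_trans; [apply Rabs_pos | apply (hfM pt0)]).
  set (L := fM * (/ (lam * lam) + Hm * (2 * Am + 1) / (lam * lam * (lam * lam)))).
  assert (HL : 0 <= L).
  { assert (0 < lam * lam) by nra.
    apply Rmult_le_pos, Rplus_le_le_0_compat; auto; [left; apply Rinv_0_lt_compat; auto|].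
    apply Rmult_le_pos; [apply Rmult_le_pos; lra | left; apply Rinv_0_lt_compat; nra]. }
  intros e He; set (d := Rmin 1 (e / (L + 1))).
  assert (Hd : 0 < d <= 1)
    by (unfold d, Rmin; destruct Rle_dec; split; try lra; apply Rdiv_lt_0_compat; lra).
  assert (HLd : L * d <= e).
  { apply Rle_trans with (L * (e / (L + 1))); [apply Rmult_le_compat_l; auto; apply Rmin_r|].
    apply Rle_trans with ((L + 1) * (e / (L + 1))); [|right; field; lra].
    apply Rmult_le_compat_r; [left; apply Rdiv_lt_0_compat|]; lra. }
  destruct (Uh d (proj1 Hd)) as [N1 HN1]; destruct (Ub1 d (proj1 Hd)) as [N2 HN2].
  destruct (Ub2 d (proj1 Hd)) as [N3 HN3].
  exists (max N1 (max N2 N3)); intros n Hn x; eapply Rle_trans; [|exact HLd].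
  destruct x as [x Hx]; simpl; apply RInt_close; auto.
  - apply ker_cont; try apply Hc; intros; apply Hp.
  - apply ker_cont; auto; intros; apply HP.
  - intros z Hz; assert (Hz1 : 0 <= z <= 1) by lra.
    unfold ker, ext; apply (kernel_value_lipschitz _ _ _ _ _ _ _ d lam fM Hm Am hlam);
      try apply G_bound; try apply Hp; try apply HP; auto.
    all: first [apply HN1 | apply HN2 | apply HN3 | lra]; lia.
Qed.

(* Injectivity of the linearised operator: if int_0^x ker(H, B1, B2) = 0 for
   all x, then G H = 0 on (0,1), hence H = 0 since G > 0 there. *)
Lemma ker_integral_injective (H B1 B2 : I01 -> R) : (forall x, 0 < f x) ->
  contI H -> contI B1 -> contI B2 -> (forall x, lam < B1 x) -> (forall x, lam < B2 x) ->
  (forall x : I01, RInt (ker f H B1 B2) 0 (proj1_sig x) = 0) -> forall x, H x = 0.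
Proof.
  intros hfpos HHc HB1 HB2 Hp1 Hp2 H0.
  apply contI_zero_interior; auto; intros y0 Hy0.
  assert (Hk : ker f H B1 B2 y0 = 0).
  { apply RInt_zero_integrand; auto; [apply ker_cont; auto|].
    intros y Hy; rewrite <- (clamp_val y Hy); apply H0. }
  unfold ker, ext in Hk; pose proof (G_pos y0 hfpos (proj1 Hy0)).
  specialize (Hp1 (clamp y0)); specialize (Hp2 (clamp y0)).
  assert (E : Gf f y0 * H (clamp y0) = 0).
  { replace (Gf f y0 * H (clamp y0))
      with (- (- (Gf f y0 * H (clamp y0)) / (B1 (clamp y0) * B2 (clamp y0)))
            * (B1 (clamp y0) * B2 (clamp y0))) by (field; split; lra).
    rewrite Hk; ring. }
  apply Rmult_integral in E; destruct E; [lra | auto].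
Qed.

End IntegralOperator.

(** * Stability of Q_D o F on K *)

Lemma not_uniform_seq {A : Type} (P : A -> Prop) (dist : A -> A -> R)
    (err : nat -> A -> A -> R) :
  ~ (exists (D : nat) (C : R), 0 < C /\
       forall a1 a2, P a1 -> P a2 -> dist a1 a2 <= C * err D a1 a2) ->
  exists a1 a2 : nat -> A, forall N,
    P (a1 N) /\ P (a2 N) /\ (INR N + 1) * err N (a1 N) (a2 N) < dist (a1 N) (a2 N).
Proof.
  intros Hn.
  assert (H : forall N, exists p : A * A, P (fst p) /\ P (snd p) /\
                (INR N + 1) * err N (fst p) (snd p) < dist (fst p) (snd p)).
  { intros N; apply NNPP; intros HN; apply Hn; exists N, (INR N + 1).
    split; [pose proof (pos_INR N); lra|].
    intros a1 a2 H1 H2; apply Rnot_lt_le; intros Hlt; apply HN; exists (a1, a2); auto. }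
  destruct (choice _ H) as [p Hp]; exists (fun N => fst (p N)), (fun N => snd (p N)); auto.
Qed.

(* If Q_N s_N -> 0 and s_N -> S uniformly along a subsequence, where the Q_N
   are uniformly bounded and converge strongly to the identity, then S = 0:
   S = (S - Q_N S) + Q_N s_N + Q_N (S - s_N). *)
Lemma strong_limit_vanishes (Q : nat -> (I01 -> R) -> (I01 -> R)) (M : R)
    (s : nat -> I01 -> R) (Sf : I01 -> R) (psi : nat -> nat) :
  (forall N, bdd_finrank_op (Q N)) -> strong_to_id Q -> 0 <= M ->
  (forall N g, contI g -> supnorm (Q N g) <= M * supnorm g) ->
  (forall N, contI (s N)) -> contI Sf -> incr psi ->
  (forall N, supnorm (Q N (s N)) < / INR (S N)) ->
  unif (fun n => s (psi n)) Sf -> forall x, Sf x = 0.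
Proof.
  intros hQ hQs HM0 HM Hsc HSc Hi HQsmall Hconv x; apply NNPP; intros Hx.
  set (ep := Rabs (Sf x)); assert (Hep : 0 < ep) by (apply Rabs_pos_lt; auto).
  assert (H1 := hQs Sf HSc); apply is_lim_seq_spec in H1.
  destruct (H1 (mkposreal (ep / 3) ltac:(lra))) as [N1 HN1]; simpl in HN1.
  destruct (Hconv (ep / (3 * (M + 1)))) as [N2 HN2]; [apply Rdiv_lt_0_compat; lra|].
  destruct (inv_small (ep / 3)) as [N3 HN3]; [lra|].
  set (n := max N1 (max N2 N3)); set (N := psi n).
  assert (HnN : (n <= N)%nat) by (apply incr_ge; auto).
  assert (Hgap : Rabs (Sf x - Q N Sf x) < ep / 3).
  { specialize (HN1 N ltac:(unfold n in HnN; lia)); rewrite Rminus_0_r in HN1.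
    rewrite Rabs_minus_sym; eapply Rle_lt_trans; [apply sup_ge_sub; auto|].
    - apply (T_cont _ (hQ N)); auto.
    - eapply Rle_lt_trans; [apply Rle_abs | exact HN1]. }
  assert (Hsmall : Rabs (Q N (s N) x) < ep / 3).
  { eapply Rle_lt_trans; [apply sup_ge, contI_bounded, (T_cont _ (hQ N)); auto|].
    eapply Rlt_trans; [apply HQsmall | apply HN3; unfold n in HnN; lia]. }
  assert (Hclose : Rabs (Q N Sf x - Q N (s N) x) <= ep / 3).
  { eapply Rle_trans; [apply sup_ge_sub; apply (T_cont _ (hQ N)); auto|].
    eapply Rle_trans; [apply (T_sup_sub (Q N) (hQ N)); auto|].
    apply Rle_trans with (M * (ep / (3 * (M + 1)))).
    - apply Rmult_le_compat_l; auto; apply sup_le; intros y.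
      rewrite Rabs_minus_sym; apply (HN2 n); unfold n; lia.
    - apply Rle_trans with ((M + 1) * (ep / (3 * (M + 1)))); [|right; field; lra].
      apply Rmult_le_compat_r; [left; apply Rdiv_lt_0_compat|]; lra. }
  assert (ep <= Rabs (Sf x - Q N Sf x) + Rabs (Q N (s N) x)
                + Rabs (Q N Sf x - Q N (s N) x)); [|lra].
  unfold ep; replace (Sf x) with ((Sf x - Q N Sf x) + Q N (s N) x
                                  + (Q N Sf x - Q N (s N) x)) at 1 by ring.
  eapply Rle_trans; [apply Rabs_triang | apply Rplus_le_compat_r, Rabs_triang].
Qed.

Lemma normalized_difference (a1 a2 : I01 -> R) :
  contI a1 -> contI a2 -> 0 < supnorm (fun x => a1 x - a2 x) ->
  let h := fun x => / supnorm (fun y => a1 y - a2 y) * (a1 x - a2 x) in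
  contI h /\ (forall x, Rabs (h x) <= 1) /\ supnorm h = 1.
Proof.
  intros Ha1 Ha2 Hd h; set (d := supnorm (fun y => a1 y - a2 y)) in *.
  assert (Hb : bounded (fun x => a1 x - a2 x)) by (apply contI_bounded, contI_sub; auto).
  split; [apply contI_scal, contI_sub; auto | split].
  - intros x; unfold h; rewrite Rabs_mult, Rabs_inv, (Rabs_right d) by lra.
    apply (Rmult_le_reg_l d); auto.
    rewrite <- Rmult_assoc, Rinv_r, Rmult_1_l, Rmult_1_r by lra.
    apply (sup_ge (fun y => a1 y - a2 y)); auto.
  - unfold h; rewrite sup_scal, Rabs_right by (auto; left; apply Rinv_0_lt_compat; auto).
    apply Rinv_l; fold d; lra.
Qed.

Section Stability.
Variable f : I01 -> R.
Hypothesis hf : contI f.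
Variable lam : R.
Hypothesis hlam : 0 < lam.
Variables W K : (I01 -> R) -> Prop.
Hypothesis hW : subspaceC W.
Hypothesis hWfd : findim W.
Hypothesis hKW : forall a, K a -> W a.
Hypothesis hKH : forall a, K a -> H_lam lam a.
Hypothesis hKc : compactC K.

Definition secant (a1 a2 : I01 -> R) (x : I01) : R :=
  / supnorm (fun y => a1 y - a2 y) * (Fop f a1 x - Fop f a2 x).

Lemma K_cont (a : I01 -> R) : K a -> contI a.
Proof. intros Ka; apply (hKH a Ka). Qed.

Lemma K_pos (a : I01 -> R) : K a -> forall x, lam < a x.
Proof. intros Ka; apply (hKH a Ka). Qed.

Lemma joint_subsequence (a1 a2 h : nat -> I01 -> R) :
  (forall N, K (a1 N) /\ K (a2 N) /\ W (h N)) -> (forall N x, Rabs (h N x) <= 1) ->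
  exists psi A1 A2 H, incr psi /\ K A1 /\ K A2 /\ contI H /\
    unif (fun n => a1 (psi n)) A1 /\ unif (fun n => a2 (psi n)) A2 /\
    unif (fun n => h (psi n)) H.
Proof.
  intros Ha Hh.
  destruct (compact_subseq K a1 hKc) as [ps1 [A1 [Hi1 [KA1 U1]]]]; [apply Ha|].
  destruct (compact_subseq K (fun n => a2 (ps1 n)) hKc) as [ps2 [A2 [Hi2 [KA2 U2]]]];
    [intros; apply Ha|].
  destruct hW as [Wc [_ [Wa Ws]]]; destruct hWfd as [l Hl].
  destruct (findim_compact l W (fun n => h (ps1 (ps2 n))) 1) as [ps3 [H [Hi3 [HHc U3]]]].
  { split; auto. }
  { intros g Wg; destruct (Hl g Wg) as [c ->]; exists c; reflexivity. }
  { intros; apply Ha. }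
  { auto. }
  exists (fun n => ps1 (ps2 (ps3 n))), A1, A2, H.
  repeat split; auto.
  - apply (incr_comp ps1 (fun n => ps2 (ps3 n))); [|apply incr_comp]; auto.
  - apply (unif_sub (fun n => a1 (ps1 n)) A1 (fun n => ps2 (ps3 n))); auto.
    apply incr_comp; auto.
  - apply (unif_sub (fun n => a2 (ps1 (ps2 n))) A2 ps3); auto.
Qed.

Lemma secant_limit (a1 a2 : nat -> I01 -> R) :
  (forall N, K (a1 N) /\ K (a2 N) /\ 0 < supnorm (fun x => a1 N x - a2 N x)) ->
  exists psi A1 A2 H, incr psi /\ K A1 /\ K A2 /\ contI H /\ ~ (forall x, H x = 0) /\
    unif (fun n => secant (a1 (psi n)) (a2 (psi n)))
         (fun x => RInt (ker f H A1 A2) 0 (proj1_sig x)).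
Proof.
  intros Ha.
  set (h := fun N x => / supnorm (fun y => a1 N y - a2 N y) * (a1 N x - a2 N x)).
  assert (Hh : forall N, contI (h N) /\ (forall x, Rabs (h N x) <= 1) /\ supnorm (h N) = 1)
    by (intros N; destruct (Ha N) as [K1 [K2 Hd]];
        apply normalized_difference; auto using K_cont).
  assert (HW : forall N, W (h N)).
  { intros N; destruct hW as [_ [_ [Wa Ws]]].
    replace (h N) with (fun x => / supnorm (fun y => a1 N y - a2 N y)
                                 * (a1 N x + -1 * a2 N x))
      by (apply functional_extensionality; intros; unfold h; ring).
    apply Ws, Wa, Ws; apply hKW, Ha. }
  destruct (joint_subsequence a1 a2 h)
    as [psi [A1 [A2 [H [Hi [KA1 [KA2 [HHc [U1 [U2 U3]]]]]]]]]];
    [intros N; repeat split; apply Ha || apply HW | apply Hh|].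
  exists psi, A1, A2, H; repeat split; auto.
  - intros Hz; destruct (U3 (1/2)) as [N0 HN0]; [lra|].
    assert (supnorm (h (psi N0)) <= 1/2); [|rewrite (proj2 (proj2 (Hh _))) in *; lra].
    apply sup_le; intros x; specialize (HN0 N0 (le_n _) x).
    rewrite Hz, Rminus_0_r in HN0; exact HN0.
  - destruct (contI_bounded f hf) as [fM HfM].
    replace (fun n => secant (a1 (psi n)) (a2 (psi n))) with
      (fun n (x : I01) => RInt (ker f (h (psi n)) (a1 (psi n)) (a2 (psi n))) 0 (proj1_sig x)).
    + apply (ker_integral_unif f hf fM HfM lam hlam); auto using K_cont;
        try (intros; split; apply K_pos; auto; apply Ha).
      intros n; split; [apply Hh | split; apply K_cont, Ha].
    + apply functional_extensionality; intros n; apply functional_extensionality; intros x.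
      destruct (Ha (psi n)) as [K1 [K2 _]].
      unfold secant; rewrite (Fop_diff f hf lam) by auto using K_cont, K_pos; reflexivity.
Qed.

Lemma secant_cont (a1 a2 : I01 -> R) : K a1 -> K a2 -> contI (secant a1 a2).
Proof.
  intros K1 K2; apply contI_scal, contI_sub;
    apply (Fop_cont f hf lam); auto using K_cont, K_pos.
Qed.

Lemma secant_Q_small (T : (I01 -> R) -> (I01 -> R)) (N : nat) (a1 a2 : I01 -> R) :
  bdd_finrank_op T -> K a1 -> K a2 ->
  (INR N + 1) * supnorm (fun x => T (Fop f a1) x - T (Fop f a2) x)
    < supnorm (fun x => a1 x - a2 x) ->
  supnorm (T (secant a1 a2)) < / INR (S N).
Proof.
  intros HT K1 K2 Hbad.
  assert (HF : forall a, K a -> contI (Fop f a))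
    by (intros; apply (Fop_cont f hf lam); auto using K_cont, K_pos).
  set (d := supnorm (fun x => a1 x - a2 x)) in *.
  set (e := supnorm (fun x => T (Fop f a1) x - T (Fop f a2) x)) in *.
  assert (He : 0 <= e) by apply sup_nonneg.
  assert (Hd : 0 < d) by (pose proof (pos_INR N); nra).
  rewrite (sup_eq _ (fun x => / d * (T (Fop f a1) x - T (Fop f a2) x)))
    by (intros x; unfold secant; rewrite T_scal, T_sub by auto using contI_sub; reflexivity).
  rewrite sup_scal, Rabs_right, S_INR
    by (auto; try (left; apply Rinv_0_lt_compat; auto);
        apply contI_bounded, contI_sub; apply (T_cont _ HT); auto).
  fold e; pose proof (pos_INR N).
  apply (Rmult_lt_reg_l (d * (INR N + 1))); [nra|].
  replace (d * (INR N + 1) * (/ d * e)) with ((INR N + 1) * e) by (field; lra).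
  replace (d * (INR N + 1) * / (INR N + 1)) with d by (field; lra); exact Hbad.
Qed.

End Stability.

Theorem mainTheorem8
  (f : I01 -> R) (lam : R) (W K : (I01 -> R) -> Prop)
  (Q : nat -> (I01 -> R) -> (I01 -> R))
  (hf : contI f) (hfpos : forall x, 0 < f x) (hlam : 0 < lam)
  (hW : subspaceC W) (hWfd : findim W)
  (hKW : forall a, K a -> W a) (hKH : forall a, K a -> H_lam lam a)
  (hKc : compactC K) (hKcv : convexC K)
  (hQ : forall N, bdd_finrank_op (Q N)) (hQs : strong_to_id Q) :
  exists (D : nat) (C : R), 0 < C /\
    forall a1 a2, K a1 -> K a2 ->
      supnorm (fun x => a1 x - a2 x)
        <= C * supnorm (fun x => Q D (Fop f a1) x - Q D (Fop f a2) x).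
Proof.
  destruct (uniform_boundedness Q hQ (strong_to_id_bounded Q hQ hQs)) as [M [HM0 HM]].
  destruct (contI_bounded f hf) as [fM HfM].
  pose proof (K_cont lam K hKH) as Kc; pose proof (K_pos lam K hKH) as Kp.
  apply NNPP; intros Hn.
  destruct (not_uniform_seq K (fun a1 a2 => supnorm (fun x => a1 x - a2 x))
    (fun D a1 a2 => supnorm (fun x => Q D (Fop f a1) x - Q D (Fop f a2) x)) Hn)
    as [a1 [a2 Ha]].
  destruct (secant_limit f hf lam hlam W K hW hWfd hKW hKH hKc a1 a2)
    as [psi [A1 [A2 [H [Hi [KA1 [KA2 [HHc [HHnz Hconv]]]]]]]]].
  { intros N; destruct (Ha N) as [K1 [K2 Hbad]]; repeat split; auto.
    pose proof (pos_INR N); pose proof (sup_nonneg (fun x => Q N (Fop f (a1 N)) x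
                                                    - Q N (Fop f (a2 N)) x)); nra. }
  apply HHnz, (ker_integral_injective f hf lam hlam H A1 A2 hfpos HHc); auto.
  apply (strong_limit_vanishes Q M (fun N => secant f (a1 N) (a2 N)) _ psi); auto.
  - intros N; apply (secant_cont f hf lam hlam K hKH); apply Ha.
  - apply contI_RInt, (ker_cont f hf lam hlam); auto.
  - intros N; apply (secant_Q_small f hf lam hlam K hKH); auto; apply Ha.
Qed.
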